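(* Let $F$, $G$, $\Pi$ be as in the context. Let $S$ and $S'$ be two attracting (resp. repelling) strips in $\Sigma_A\times I$ with respect to $G$ such that $\Pi(S)=\Pi(S')$. If $B$ and $B'$ are their maximal attractors (resp. maximal repellers), then $\Pi(B)=\Pi(B')$.
   Context: $I=[0,1]$, $R(x)=1-x$. $F(\xi,p)=(\sigma(\xi),f_{\xi_0}(p))$ on $\Sigma_N\times I$, $\Sigma_N=\{1,\ldots,N\}^{\mathbb Z}$, with $f_i$ $C^1$-diffeomorphisms onto their images. $\mathcal I_P$ / $\mathcal I_R$: indices of orientation preserving / reversing $f_i$. $A=(a_{ij})_{i,j=1}^{2N}$ with $a_{ij}=1$ if ($i\in\mathcal I_P$, $j\le N$), or ($i\in\mathcal I_R$, $j>N$), or ($i-N\in\mathcal I_P$, $j>N$), or ($i-N\in\mathcal I_R$, $j\le N$), else $0$; $\Sigma_A$ the $A$-admissible sequences in $\{1,\ldots,2N\}^{\mathbb Z}$ with shift $\sigma_A$; $\pi(\omega)_n=\overline{\omega_n}$ ($\overline i=i$ for $i\le N$, $\overline i=i-N$ otherwise). $G(\omega,x)=(\sigma_A(\omega),g_{\omega_0}(x))$ with $g_i=f_i$, $g_{i+N}=R\circ f_i\circ R$ ($i\in\mathcal I_P$), $g_i=R\circ f_i$, $g_{i+N}=f_i\circ R$ ($i\in\mathcal I_R$). $C=\{\omega\colon\omega_0\le N\}$; $\Pi(\omega,x)=(\pi(\omega),x)$ if $\omega\in C$, $(\pi(\omega),R(x))$ otherwise. Strips $S_{\varphi,\psi}=\{(\omega,x)\colon\varphi(\omega)\le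 x\le\psi(\omega)\}$ for $\varphi<\psi$ pointwise. A strip $S$ is attracting for $G$ if $G(S)\subset\operatorname{int}S$, repelling if $G^{-1}$ is defined on $S$ and $G^{-1}(S)\subset\operatorname{int}S$. Maximal attractor of attracting $S$: $\bigcap_{n\ge0}G^n(S)$; maximal repeller of repelling $S$: $\bigcap_{n\ge0}G^{-n}(S)$. *)

From HB Require Import structures.
From mathcomp Require Import all_boot all_order all_algebra.
From mathcomp Require Import all_classical all_reals topology normedtype.
Set Implicit Arguments. Unset Strict Implicit. Unset Printing Implicit Defensive.
Import Order.TTheory GRing.Theory Num.Theory.
Import numFieldNormedType.Exports.
Local Open Scope classical_set_scope.
Local Open Scope ring_scope.

Section Skew.
Variable R : realType.

Definition I01 (x : R) : Prop := 0 <= x <= 1.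
Definition refl (x : R) : R := 1 - x.

(* h is a C^1-diffeomorphism of I onto its image h(I), and h(I) ⊆ I:
   one-sided/interior derivative within I exists at every skpt of I, is
   continuous on I and nonvanishing, and h is injective on I. *)
Definition C1_diffeo_into_I (h : R -> R) : Prop :=
  (exists dh : R -> R,
    {within [set x | I01 x], continuous dh} /\
    (forall x, I01 x ->
       (fun y => (h y - h x) / (y - x)) @ within [set y | I01 y /\ y != x] (nbhs x)
         --> dh x) /\
    (forall x, I01 x -> dh x != 0)) /\
  (forall x y, I01 x -> I01 y -> h x = h y -> x = y) /\
  (forall x, I01 x -> I01 (h x)).

Definition or_pres (h : R -> R) : Prop :=
  forall x y, I01 x -> I01 y -> x < y -> h x < h y.
Definition or_rev (h : R -> R) : Prop :=
  forall x y, I01 x -> I01 y -> x < y -> h y < h x.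

Variable N : nat.
Variable f : 'I_N -> R -> R.

(* Alphabet {1,...,2N}: symbol i <= N is (inl i), symbol i+N is (inr i). *)
Definition sym2 := ('I_N + 'I_N)%type.
Definition bar (s : sym2) : 'I_N := match s with inl i => i | inr i => i end.

Definition Aent (s t : sym2) : Prop :=
  match s, t with
  | inl i, inl _ => or_pres (f i)
  | inl i, inr _ => or_rev (f i)
  | inr i, inr _ => or_pres (f i)
  | inr i, inl _ => or_rev (f i)
  end.

Definition SigmaA (w : int -> sym2) : Prop := forall n : int, Aent (w n) (w (n + 1)).

Definition shift {T : Type} (w : int -> T) : int -> T := fun n => w (n + 1).

Definition gmap (s : sym2) : R -> R :=
  match s with
  | inl i => if `[< or_pres (f i) >] then f i else refl \o f i
  | inr i => if `[< or_pres (f i) >] then refl \o f i \o refl else f i \o refl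
  end.

Definition skpt := ((int -> sym2) * R)%type.

Definition X : set skpt := [set p | SigmaA p.1 /\ I01 p.2].

Definition Gmap (p : skpt) : skpt := (shift p.1, gmap (p.1 0) p.2).

Definition piA (w : int -> sym2) : int -> 'I_N := fun n => bar (w n).

Definition Pi (p : skpt) : (int -> 'I_N) * R :=
  match p.1 0 with
  | inl _ => (piA p.1, p.2)
  | inr _ => (piA p.1, refl p.2)
  end.

Definition is_strip (S : set skpt) : Prop :=
  exists phi psi : (int -> sym2) -> R,
    (forall w, SigmaA w -> [/\ I01 (phi w), I01 (psi w) & phi w < psi w]) /\
    S = [set p | X p /\ phi p.1 <= p.2 <= psi p.1].

(* interior in Sigma_A x I (product of the cylinder topology and the
   usual topology of I) *)
Definition interior_X (S : set skpt) : set skpt :=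
  [set p | S p /\ exists (n : nat) (e : R), 0 < e /\
     forall q, X q -> (forall k : int, `|k| <= n%:Z -> q.1 k = p.1 k) ->
        `|q.2 - p.2| < e -> S q].

Definition attracting (S : set skpt) : Prop :=
  is_strip S /\ Gmap @` S `<=` interior_X S.

Definition repelling (S : set skpt) : Prop :=
  is_strip S /\ S `<=` Gmap @` X /\
  [set p | X p /\ S (Gmap p)] `<=` interior_X S.

Definition max_attractor (S : set skpt) : set skpt :=
  [set p | forall n : nat, (iter n Gmap @` S) p].

Definition max_repeller (S : set skpt) : set skpt :=
  [set p | X p /\ forall n : nat, S (iter n Gmap p)].

End Skew.

(** Π is two-to-one on Σ_A × I: its fibres are the orbits of the involution
    [flip], which exchanges the two copies of each symbol and reflects the
    fibre coordinate, and [flip] commutes with G.  Hence Π(S) = Π(S') says that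
    every point of S lies in S' up to [flip], and the same then holds for each
    G^n(S) (resp. G^-n(S)).  These sets decrease with n, so if p drops out of
    one of the primed ones, then [flip p] belongs to all of them. *)
From HB Require Import structures.
From mathcomp Require Import all_boot all_order all_algebra.
From mathcomp Require Import all_classical all_reals topology normedtype.
From mathcomp Require Import lra.
Set Implicit Arguments. Unset Strict Implicit. Unset Printing Implicit Defensive.
Import Order.TTheory GRing.Theory Num.Theory.
Local Open Scope classical_set_scope.
Local Open Scope ring_scope.

Lemma nonincreasing_or_forall (T : Type) (A : nat -> set T) (p q : T) :
  (forall j k, (j <= k)%N -> A k `<=` A j) ->
  (forall n, A n p \/ A n q) -> (forall n, A n p) \/ (forall n, A n q).
Proof.
move=> decrA pq; have [|] := boolp.pselect (forall n, A n p); first by left.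
move=> /boolp.existsNP[m Anp]; right => n.
have Amq : A m q by case: (pq m).
have [nm|mn] := leqP n m; first exact: decrA nm _ Amq.
case: (pq n) => // /(decrA _ _ (ltnW mn)) Amp; contradiction.
Qed.

Lemma image_iter_nonincreasing (T : Type) (g : T -> T) (S : set T) j k :
  g @` S `<=` S -> (j <= k)%N -> iter k g @` S `<=` iter j g @` S.
Proof.
move=> gS /subnK <-; elim: (k - j)%N => [|d IH]; first by rewrite add0n.
move=> _ [s Ss <-]; apply: IH; exists (g s); first by apply: gS; exists s.
by rewrite addSn iterSr.
Qed.

Lemma preimage_iter_nonincreasing (T : Type) (g : T -> T) (P S : set T) j k :
  (forall y, P y -> P (g y)) -> (forall y, P y -> S (g y) -> S y) ->
  (j <= k)%N -> [set y | P y /\ S (iter k g y)] `<=` [set y | P y /\ S (iter j g y)].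
Proof.
move=> gP Sback /subnK <- y [Py]; rewrite iterD => Sk; split=> //.
have Piter i z : P z -> P (iter i g z) by elim: i => //= i IH /IH /gP.
move: (iter j g y) (Piter j y Py) Sk; elim: (k - j)%N => // d IH z Pz.
by rewrite iterSr => /(IH _ (gP _ Pz)); apply: Sback.
Qed.

Section SkewProduct.
Variables (R : realType) (N : nat) (f : 'I_N -> R -> R).

Definition swap_sym (s : sym2 N) : sym2 N :=
  match s with inl i => inr i | inr i => inl i end.

Definition flip (p : skpt R N) : skpt R N := (fun n => swap_sym (p.1 n), refl p.2).

Lemma swap_symK : involutive swap_sym. Proof. by case. Qed.

Lemma bar_swap_sym s : bar (swap_sym s) = bar s. Proof. by case: s. Qed.

Lemma bar_eq_or_swap (s t : sym2 N) : bar s = bar t -> t = s \/ t = swap_sym s.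
Proof. by case: s => i; case: t => j /= ->; [left|right|right|left]. Qed.

Lemma reflK : involutive (@refl R).
Proof. by move=> x; rewrite /refl opprB addrC subrK. Qed.

Lemma I01_refl x : I01 x -> @I01 R (refl x).
Proof. by rewrite /I01 /refl => /andP[x0 x1]; apply/andP; split; lra. Qed.

Lemma or_pres_or_rev_False (h : R -> R) : or_pres h -> or_rev h -> False.
Proof.
have I0 : I01 (0 : R) by rewrite /I01 lexx ler01.
have I1 : I01 (1 : R) by rewrite /I01 lexx ler01.
move=> /(_ _ _ I0 I1 ltr01) lt01 /(_ _ _ I0 I1 ltr01) /(lt_trans lt01).
by rewrite ltxx.
Qed.

Lemma Aent_swap s t : Aent f (swap_sym s) (swap_sym t) = Aent f s t.
Proof. by case: s; case: t. Qed.

(* A symbol determines the copy of the next (resp. previous) symbol, because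
   no f i is both orientation preserving and reversing. *)
Lemma Aent_succ_inj s t t' : Aent f s t -> Aent f s t' -> bar t = bar t' -> t = t'.
Proof.
case: s => i; case: t => j; case: t' => k /= A1 A2 /= jk; subst => //;
  by case: (or_pres_or_rev_False A1 A2) || case: (or_pres_or_rev_False A2 A1).
Qed.

Lemma Aent_pred_inj s s' t : Aent f s t -> Aent f s' t -> bar s = bar s' -> s = s'.
Proof.
case: s => i; case: s' => j; case: t => k /= A1 A2 /= ij; subst => //;
  by case: (or_pres_or_rev_False A1 A2) || case: (or_pres_or_rev_False A2 A1).
Qed.

Lemma SigmaA_swap w : SigmaA f w -> SigmaA f (fun n => swap_sym (w n)).
Proof. by move=> Aw n; rewrite Aent_swap. Qed.

Lemma SigmaA_eq w v : SigmaA f w -> SigmaA f v -> piA w = piA v -> w 0 = v 0 -> w = v.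
Proof.
move=> Aw Av piAwv w0v0.
have bar_wv n : bar (w n) = bar (v n) by apply: (congr1 (fun u => u n) piAwv).
apply: boolp.funext; elim/int_rect => // n IH.
- rewrite -addn1 PoszD; apply: (Aent_succ_inj (Aw n)) => //.
  by rewrite IH; apply: Av.
- have En : - (n.+1%:Z) + 1 = - n%:Z by rewrite -addn1 PoszD opprD addrNK.
  apply: (Aent_pred_inj (t := w (- n%:Z))) => //; first by rewrite -En; apply: Aw.
  by rewrite IH -En; apply: Av.
Qed.

Lemma flipK : involutive flip.
Proof.
case=> w x; rewrite /flip /= reflK; congr pair.
by apply: boolp.funext => n /=; rewrite swap_symK.
Qed.

Lemma piA_swap w : piA (fun n => swap_sym (w n)) = piA w.
Proof. by apply: boolp.funext => n; rewrite /piA bar_swap_sym. Qed.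

Lemma Pi_fst (p : skpt R N) : (Pi p).1 = piA p.1.
Proof. by rewrite /Pi; case: (p.1 0). Qed.

Lemma Pi_flip (p : skpt R N) : Pi (flip p) = Pi p.
Proof.
by case: p => w x; rewrite /Pi /= piA_swap; case: (w 0) => i /=; rewrite ?reflK.
Qed.

Lemma X_flip p : X f p -> X f (flip p).
Proof. by case=> Aw Ix; split; [apply: SigmaA_swap | apply: I01_refl]. Qed.

Lemma Gmap_flip p : Gmap f (flip p) = flip (Gmap f p).
Proof.
by case: p => w x; rewrite /Gmap /flip /=; case: (w 0) => i /=; case: ifP; rewrite /= ?reflK.
Qed.

Lemma iter_Gmap_flip n p : iter n (Gmap f) (flip p) = flip (iter n (Gmap f) p).
Proof. by elim: n => //= n ->; rewrite Gmap_flip. Qed.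

Lemma Pi_eq_same_sym p q : X f p -> X f q -> p.1 0 = q.1 0 -> Pi p = Pi q -> q = p.
Proof.
case: p => w x; case: q => v y [/= Aw _] [/= Av _] /= w0v0; rewrite /Pi /= -w0v0.
have wv := SigmaA_eq Aw Av _ w0v0.
by case: (w 0) => i [/wv -> /= xy]; rewrite ?(can_inj reflK xy) ?xy.
Qed.

Lemma Pi_eq_or_flip p q : X f p -> X f q -> Pi p = Pi q -> q = p \/ q = flip p.
Proof.
move=> Xp Xq Pipq; have : bar (p.1 0) = bar (q.1 0).
  by have := congr1 (fun u => u.1 0) Pipq; rewrite /= !Pi_fst.
case/bar_eq_or_swap => [/esym|] pq0; [left | right].
  exact: Pi_eq_same_sym.
by apply: Pi_eq_same_sym; rewrite ?Pi_flip //; apply: X_flip.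
Qed.

Lemma Pi_image_subset (B B' : set (skpt R N)) :
  (forall p, B p -> B' p \/ B' (flip p)) -> @Pi R N @` B `<=` @Pi R N @` B'.
Proof.
move=> BB' _ [p /BB' [B'p|B'fp] <-]; first by exists p.
by exists (flip p); rewrite ?Pi_flip.
Qed.

Lemma mem_or_flip_mem (S' : set (skpt R N)) s : S' `<=` X f -> X f s ->
  (@Pi R N @` S') (Pi s) -> S' s \/ S' (flip s).
Proof.
move=> S'X Xs [s' S's Pis'].
by have [sS'|sS'] := Pi_eq_or_flip Xs (S'X _ S's) (esym Pis'); rewrite -sS'; [left|right].
Qed.

Lemma strip_subset_X S : is_strip f S -> S `<=` X f.
Proof. by case=> phi [psi [_ ->]] p []. Qed.

Lemma Pi_max_attractor_subset S S' : S `<=` X f -> S' `<=` X f ->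
  Gmap f @` S' `<=` S' -> @Pi R N @` S `<=` @Pi R N @` S' ->
  @Pi R N @` max_attractor f S `<=` @Pi R N @` max_attractor f S'.
Proof.
move=> SX S'X GS' PiSS'; apply: Pi_image_subset => p Bp.
apply: (nonincreasing_or_forall (A := fun n => iter n (Gmap f) @` S')).
  by move=> j k; apply: image_iter_nonincreasing.
move=> n; case: (Bp n) => s Ss <-.
have [S's|S'fs] := mem_or_flip_mem S'X (SX _ Ss) (PiSS' _ (imageP _ Ss)).
  by left; exists s.
by right; exists (flip s); rewrite ?iter_Gmap_flip ?flipK.
Qed.

Hypothesis hf : forall i, C1_diffeo_into_I (f i).

Lemma X_Gmap p : X f p -> X f (Gmap f p).
Proof.
case: p => w x [Aw Ix]; split=> [n|]; first exact: Aw.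
rewrite /Gmap /=; case: (w 0) => i /=; have [_ [_ fiI]] := hf i;
  case: ifP => _ /=; by repeat (apply: I01_refl || apply: fiI).
Qed.

Lemma X_iter n p : X f p -> X f (iter n (Gmap f) p).
Proof. by elim: n => //= n IH /IH /X_Gmap. Qed.

Lemma Pi_max_repeller_subset S S' : S' `<=` X f ->
  (forall y, X f y -> S' (Gmap f y) -> S' y) -> @Pi R N @` S `<=` @Pi R N @` S' ->
  @Pi R N @` max_repeller f S `<=` @Pi R N @` max_repeller f S'.
Proof.
move=> S'X S'back PiSS'; apply: Pi_image_subset => p [Xp Bp].
pose A n q := X f q /\ S' (iter n (Gmap f) q).
have [j k|n|Ap|Afp] := nonincreasing_or_forall (A := A) (p := p) (q := flip p).
- exact: preimage_iter_nonincreasing X_Gmap S'back.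
- have [S'pn|S'fpn] := mem_or_flip_mem S'X (X_iter n Xp) (PiSS' _ (imageP _ (Bp n))).
    by left.
  by right; rewrite /A iter_Gmap_flip; split=> //; apply: X_flip.
- by left; split=> [|n]; [exact: (Ap 0).1 | exact: (Ap n).2].
- by right; split=> [|n]; [exact: (Afp 0).1 | exact: (Afp n).2].
Qed.

End SkewProduct.

Theorem lemma3p27 (R : realType) (N : nat) (f : 'I_N -> R -> R)
  (hf : forall i, C1_diffeo_into_I (f i)) :
  (forall S S' : set (skpt R N),
     attracting f S -> attracting f S' -> @Pi R N @` S = @Pi R N @` S' ->
     @Pi R N @` max_attractor f S = @Pi R N @` max_attractor f S') /\
  (forall S S' : set (skpt R N),
     repelling f S -> repelling f S' -> @Pi R N @` S = @Pi R N @` S' ->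
     @Pi R N @` max_repeller f S = @Pi R N @` max_repeller f S').
Proof.
have forward_invariant S : attracting f S -> Gmap f @` S `<=` S.
  by move=> [_ GS] p /GS [].
have backward_invariant S : repelling f S ->
    forall y, X f y -> S (Gmap f y) -> S y.
  by move=> [_ [_ GS]] y Xy /(conj Xy) /GS [].
split=> S S' hS hS' PiSS'.
  have [SX S'X] := (strip_subset_X hS.1, strip_subset_X hS'.1).
  by apply/seteqP; split; apply: Pi_max_attractor_subset; rewrite ?PiSS' //;
    apply: forward_invariant.
have [SX S'X] := (strip_subset_X hS.1, strip_subset_X hS'.1).
by apply/seteqP; split; apply: (Pi_max_repeller_subset hf); rewrite ?PiSS' //;
  apply: backward_invariant.
Qed.
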